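(* Let $N=n+k$, let $\lambda=(\lambda_1,\dots,\lambda_n)$ be a partition with $\lambda_1>k$, and let $y=y_\mu$ be a solution of the Bethe ansatz equations. Then $$G_\lambda(y|\ominus t)=q\sum_{r=0}^{\lambda_1-1-k}h_{\lambda_1-1-k-r}(t_1,\dots,t_{r+1})\,G_{(\lambda_2-1,\dots,\lambda_n-1,r)}(y|\ominus t)\prod_{i=1}^r(1+\beta t_i),$$ where the $h_m$ are complete symmetric polynomials and the polynomial on the right, indexed by an integer sequence, is defined by the determinant formula in the context.
   Context: $\beta$ indeterminate, $x\oplus y=x+y+\beta xy$, $x\ominus y=(x-y)/(1+\beta y)$, $\ominus x=-x/(1+\beta x)$. Parameters $t_1,\dots,t_N$ with $t_j=0$ for $j>N$, $\ominus t=(\ominus t_1,\ominus t_2,\dots)$, $(x|s)^m=\prod_{i=1}^m(x\oplus s_i)$. For an integer sequence $\theta=(\theta_1,\dots,\theta_n)$ with $\theta_i+n-i\ge0$, $G_\theta(y|s)=\det[(y_j|s)^{\theta_i+n-i}(1+\beta y_j)^{i-1}]_{i,j}/\det[y_j^{n-i}]_{i,j}$; for partitions this is the factorial Grothendieck polynomial. Bethe ansatz equations: $(-1)^n\frac{\Pi(y)}{(1+\beta y_i)^n}\prod_{j=1}^N(y_i\ominus t_j)+q=0$ for $i=1,\dots,n$, with $\Pi(y)=\prod_i(1+\beta y_i)$; $y_\mu$ ($\mu\subset(k^n)$) denotes the solution in formal power series in $q$ with pairwise distinct components $y_i\equiv t_i\pmod q$, $i\in I_\mu=\{\mu_{n+1-i}+i\}$.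 *)

From HB Require Import structures.
From mathcomp Require Import all_boot all_order all_algebra.
Set Implicit Arguments. Unset Strict Implicit. Unset Printing Implicit Defensive.
Import Order.TTheory GRing.Theory Num.Theory.
Local Open Scope ring_scope.

Section Defs.
Variable K : fieldType.

Definition oplus (b x y : K) : K := x + y + b * x * y.
Definition ominus (b x y : K) : K := (x - y) / (1 + b * y).
Definition ominus1 (b x : K) : K := - x / (1 + b * x).

(* the sequence (-) s, parameters indexed from 1 *)
Definition ominus_seq (b : K) (s : nat -> K) : nat -> K := fun j => ominus1 b (s j).

Definition fpow (b x : K) (s : nat -> K) (m : nat) : K :=
  \prod_(1 <= i < m.+1) oplus b x (s i).

(* G_theta(y|s) for an integer sequence theta = (theta_1,...,theta_n),
   stored 0-based: theta i = theta_{i+1}, i < n.  Row index i (0-based)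
   corresponds to paper row i+1: exponent theta_{i+1} + n - (i+1),
   factor (1 + b y_j)^i, Vandermonde entry y_j^(n-(i+1)). *)
Definition Gfun (b : K) (n : nat) (theta : nat -> int) (y : 'I_n -> K)
    (s : nat -> K) : K :=
  \det (\matrix_(i < n, j < n)
          (fpow b (y j) s (absz (theta i + (n - i.+1)%:Z)) * (1 + b * y j) ^+ i))
  / \det (\matrix_(i < n, j < n) (y j ^+ (n - i.+1))).

Definition hcomp (m p : nat) (x : nat -> K) : K :=
  \sum_(a : {ffun 'I_p -> 'I_m.+1} | (\sum_(i < p) (a i : nat))%N == m)
     \prod_(i < p) x i.+1 ^+ a i.

Definition PiY (b : K) (n : nat) (y : 'I_n -> K) : K := \prod_(i < n) (1 + b * y i).

Definition BAE (b q : K) (N n : nat) (t : nat -> K) (y : 'I_n -> K) : Prop :=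
  forall i : 'I_n,
    (-1) ^+ n * (PiY b y / (1 + b * y i) ^+ n) * \prod_(1 <= j < N.+1) ominus b (y i) (t j)
      + q = 0.

Definition shiftSeq (n : nat) (lam : nat -> nat) (r : nat) : nat -> int :=
  fun i => if (i.+1 < n)%N then (lam i.+1)%:Z - 1 else r%:Z.

End Defs.

(* The first row of the determinant defining [G_lambda(y|(-)t)] has entries
   [(y_j|(-)t)^(lambda_1 + n - 1) = (y_j|(-)t)^N * y_j^m], where [m = lambda_1 - 1 - k]
   and the last factors [1 (+) ((-) t_i)] are [y_j] since [t_i = 0] for [i > N].  The Bethe
   ansatz equations turn [(y_j|(-)t)^N] into a constant multiple of [(1 + b y_j)^n], and the
   expansion [y^m = sum_r h_(m-r)(t_1..t_(r+1)) (y - t_1)...(y - t_r)] rewrites [y_j^m] as a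
   combination of factorial powers [(y_j|(-)t)^r].  By linearity of the determinant in its
   first row each term is, up to the factor [(1 + b y_j)^n] pulled out of each column and
   a cyclic permutation of the rows, the determinant of [G_(lambda_2-1, ..., lambda_n-1, r)]. *)
From HB Require Import structures.
From mathcomp Require Import all_boot all_order all_algebra perm.
From mathcomp Require Import ring zify.
Set Implicit Arguments. Unset Strict Implicit. Unset Printing Implicit Defensive.
Import Order.TTheory GRing.Theory Num.Theory.
Local Open Scope ring_scope.

Section CompleteSymmetric.
Variables (K : fieldType) (x : nat -> K).

(* [hrec p m = h_m(x_1, ..., x_p)], by splitting off the power of [x_p]. *)
Fixpoint hrec (p m : nat) : K :=
  match p with
  | 0 => (m == 0)%N%:R
  | p'.+1 => \sum_(0 <= i < m.+1) hrec p' i * x p'.+1 ^+ (m - i)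
  end.

Lemma hrec0 p : hrec p 0 = 1.
Proof. by elim: p => [|p IH] //=; rewrite big_nat1 IH subnn expr0 mulr1. Qed.

Lemma hrecSS p m : hrec p.+1 m.+1 = hrec p m.+1 + x p.+1 * hrec p.+1 m.
Proof.
rewrite /= big_nat_recr //= subnn expr0 mulr1 addrC; congr (_ + _).
rewrite mulr_sumr; apply: eq_big_nat => i /andP[_ lt_i_m].
by rewrite subSn // exprS mulrCA.
Qed.

Lemma hrecS p m : hrec p.+1 m = \sum_(0 <= i < m.+1) hrec p i * x p.+1 ^+ (m - i).
Proof. by []. Qed.

Arguments hrec : simpl never.

Definition hgen (p M : nat) : {poly K} := \prod_(i < p) \poly_(j < M.+1) (x i.+1 ^+ j).

Lemma coef_hgen p M m : (m <= M)%N -> (hgen p M)`_m = hrec p m.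
Proof.
elim: p m => [|p IH] m le_m_M; first by rewrite /hgen big_ord0 coef1.
rewrite /hgen big_ord_recr /= -/(hgen p M) coefM /= hrecS big_mkord.
apply: eq_bigr => i _; rewrite IH; last by apply: leq_trans le_m_M; rewrite -ltnS.
by rewrite coef_poly ifT // ltnS (leq_trans (leq_subr _ _)).
Qed.

Lemma hcompE m p : hcomp m p x = hrec p m.
Proof.
rewrite -(@coef_hgen p m m (leqnn m)) /hcomp.
have -> : hgen p m = \prod_(i < p) \sum_(j < m.+1) (x i.+1 ^+ j *: 'X^j).
  by apply: eq_bigr => i _; rewrite poly_def.
rewrite bigA_distr_bigA /= coef_sum [LHS]big_mkcond /=; apply: eq_bigr => f _.
have -> : \prod_(i < p) (x i.+1 ^+ f i *: 'X^(f i))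
    = (\prod_(i < p) x i.+1 ^+ f i)%:P * 'X^(\sum_(i < p) (f i : nat)).
  rewrite -prodrXr rmorph_prod -big_split /=.
  by apply: eq_bigr => i _; rewrite mul_polyC.
by rewrite coefCM coefXn [m == _]eq_sym; case: (_ == m); rewrite ?mulr1 ?mulr0.
Qed.

(* Newton interpolation of [y ^+ m] at the nodes [x_1, x_2, ...]. *)
Lemma expr_newton (y : K) m :
  y ^+ m = \sum_(0 <= r < m.+1) hrec r.+1 (m - r) * \prod_(1 <= i < r.+1) (y - x i).
Proof.
elim: m => [|m IH]; first by rewrite big_nat1 subnn hrec0 big_geq // mulr1 expr0.
set P := fun r => \prod_(1 <= i < r.+1) (y - x i).
have PS r : P r.+1 = P r * (y - x r.+1) by rewrite /P big_nat_recr.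
have shift_node r : y * (hrec r.+1 (m - r) * P r)
    = hrec r.+1 (m - r) * P r.+1 + x r.+1 * (hrec r.+1 (m - r) * P r).
  by rewrite PS; ring.
rewrite exprS IH mulr_sumr (eq_bigr _ (fun r _ => shift_node r)) big_split /=.
rewrite [RHS]big_nat_recr //= subnn hrec0 mul1r.
have -> : \sum_(0 <= i < m.+1) hrec i.+1 (m.+1 - i) * P i
    = \sum_(0 <= i < m.+1) hrec i (m.+1 - i) * P i
      + \sum_(0 <= i < m.+1) x i.+1 * (hrec i.+1 (m - i) * P i).
  rewrite -big_split /=; apply: eq_big_nat => i /andP[_ lt_i_m].
  by rewrite subSn // hrecSS; ring.
rewrite addrAC; congr (_ + _).
rewrite [X in _ = X + _]big_nat_recl // subn0 (_ : hrec 0 m.+1 = 0) // mul0r add0r.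
rewrite [LHS]big_nat_recr //= subnn hrec0 mul1r.
by congr (_ + _); apply: eq_big_nat => i _; rewrite subSS.
Qed.

End CompleteSymmetric.

Lemma signr_nat_sqr (R : comPzRingType) n : (-1) ^+ n * (-1) ^+ n = 1 :> R.
Proof. by rewrite -exprMn mulrNN mulr1 expr1n. Qed.

Section FactorialPowers.
Variables (K : fieldType) (b : K) (t : nat -> K).
Hypothesis unit_t : forall j, 1 + b * t j != 0.

Lemma oplus_ominus1 (y : K) j : oplus b y (ominus1 b (t j)) = ominus b y (t j).
Proof. by rewrite /oplus /ominus1 /ominus; field; apply: unit_t. Qed.

Lemma fpow_ominus_seq (y : K) m :
  fpow b y (ominus_seq b t) m = \prod_(1 <= i < m.+1) ominus b y (t i).
Proof. by apply: eq_bigr => i _; rewrite /ominus_seq oplus_ominus1. Qed.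

Lemma fpow_ominus_seq_mul_prod (y : K) r :
  fpow b y (ominus_seq b t) r * \prod_(1 <= i < r.+1) (1 + b * t i)
  = \prod_(1 <= i < r.+1) (y - t i).
Proof.
rewrite fpow_ominus_seq -big_split /=; apply: eq_bigr => i _.
by rewrite /ominus; field; apply: unit_t.
Qed.

Section Truncated.
Variable N : nat.
Hypothesis t_eq0 : forall j, (N < j)%N -> t j = 0.

Lemma fpow_ominus_seqD (y : K) d :
  fpow b y (ominus_seq b t) (N + d) = fpow b y (ominus_seq b t) N * y ^+ d.
Proof.
rewrite !fpow_ominus_seq (@big_cat_nat _ _ _ N.+1) //=; last by lia.
congr (_ * _); rewrite (@eq_big_nat _ _ _ _ _ _ (fun _ => y)).
  by rewrite prodr_const_nat; congr (_ ^+ _); lia.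
by move=> i /andP[lt_N_i _]; rewrite t_eq0 // /ominus mulr0 addr0 subr0 divr1.
Qed.

Lemma fpow_ominus_seq_expand (y : K) m :
  fpow b y (ominus_seq b t) (N + m)
  = fpow b y (ominus_seq b t) N
    * \sum_(0 <= r < m.+1) hcomp (m - r) r.+1 t * \prod_(1 <= i < r.+1) (1 + b * t i)
                           * fpow b y (ominus_seq b t) r.
Proof.
rewrite fpow_ominus_seqD (expr_newton t); congr (_ * _); apply: eq_bigr => r _.
by rewrite hcompE -fpow_ominus_seq_mul_prod; ring.
Qed.

Lemma BAE_fpow q n (y : 'I_n -> K) j :
  (forall i, 1 + b * y i != 0) -> BAE b q N t y ->
  fpow b (y j) (ominus_seq b t) N = - ((-1) ^+ n * q / PiY b y) * (1 + b * y j) ^+ n.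
Proof.
move=> unit_y /(_ j) /eqP; rewrite addr_eq0 => /eqP bae.
have Pi_neq0 : PiY b y != 0 by apply/prodf_neq0 => i _; apply: unit_y.
have yj_neq0 : (1 + b * y j) ^+ n != 0 by rewrite expf_neq0.
rewrite fpow_ominus_seq -[q]opprK -bae; set P := \prod_(_ <= _ < _) _.
transitivity ((-1) ^+ n * (-1) ^+ n * P); first by rewrite signr_nat_sqr mul1r.
by field; rewrite Pi_neq0 yj_neq0.
Qed.

End Truncated.
End FactorialPowers.

Lemma det_sum_row (R : comPzRingType) n (A : 'M[R]_n) (i0 : 'I_n) (I : Type) (s : seq I)
    (c : I -> R) (F : I -> 'I_n -> R) :
  (forall j, A i0 j = \sum_(r <- s) c r * F r j) ->
  \det A = \sum_(r <- s) c r * \det (\matrix_(i, j) if i == i0 then F r j else A i j).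
Proof.
move=> row_i0; rewrite (expand_det_row A i0).
under [RHS]eq_bigr => r _ do rewrite (expand_det_row _ i0) mulr_sumr.
rewrite exchange_big /=; apply: eq_bigr => j _.
rewrite row_i0 mulr_suml; apply: eq_bigr => r _; rewrite mxE eqxx -mulrA; congr (_ * (_ * _)).
rewrite /cofactor; congr (_ * \det _); apply/matrixP => i j'.
by rewrite !mxE eq_sym (negbTE (neq_lift _ _)).
Qed.

(* [X] is [A] with its rows rotated down by one and its columns scaled by [d]. *)
Lemma det_rot_rows_scale (R : comPzRingType) n (A X : 'M[R]_n.+1) (d : 'I_n.+1 -> R) :
  (forall j, X ord0 j = A ord_max j * d j) ->
  (forall (i : 'I_n) j, X (lift ord0 i) j = A (lift ord_max i) j * d j) ->
  \det X = (-1) ^+ n * \det A * \prod_j d j.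
Proof.
move=> X0 XS; pose s : 'S_n.+1 := lift_perm ord0 ord_max 1.
have -> : X = row_perm s (A *m diag_mx (\row_j d j)).
  apply/matrixP => i j; rewrite mul_mx_diag !mxE.
  case: (unliftP ord0 i) => [i' ->|->].
    by rewrite /s lift_perm_lift perm1 XS.
  by rewrite /s lift_perm_id X0.
rewrite row_permE !det_mulmx det_perm det_diag odd_lift_perm odd_perm1 /= addbF.
by rewrite signr_odd mulrA; congr (_ * _); apply: eq_bigr => j _; rewrite mxE.
Qed.

Definition Gmx (K : fieldType) (b : K) n (theta : nat -> int) (y : 'I_n -> K)
    (s : nat -> K) : 'M[K]_n :=
  \matrix_(i < n, j < n)
    (fpow b (y j) s (absz (theta i + (n - i.+1)%:Z)) * (1 + b * y j) ^+ i).

Lemma GfunE (K : fieldType) (b : K) n theta (y : 'I_n -> K) s :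
  Gfun b theta y s = \det (Gmx b theta y s) / \det (\matrix_(i, j) (y j ^+ (n - i.+1))).
Proof. by []. Qed.

Lemma det_Gmx_shiftSeq (K : fieldType) (b : K) n (lam : nat -> nat) r
    (y : 'I_n.+1 -> K) s :
  \det (\matrix_(i, j) if i == ord0 then fpow b (y j) s r * (1 + b * y j) ^+ n.+1
                       else Gmx b (fun i => (lam i)%:Z) y s i j)
  = (-1) ^+ n * \det (Gmx b (shiftSeq n.+1 lam r) y s) * PiY b y.
Proof.
apply: det_rot_rows_scale => [j|i j]; rewrite !mxE ?eqxx.
  by rewrite /shiftSeq /= ltnn subnn addr0 exprSr mulrA.
rewrite lift_eqF /shiftSeq lift0 lift_max ltnS ltn_ord exprSr mulrA.
congr (fpow _ _ _ _ * _ * _).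
have -> : (n.+1 - i.+1 = (n.+1 - i.+2).+1)%N by have := ltn_ord i; lia.
by congr absz; lia.
Qed.

Theorem mainTheorem9 (K : fieldType) (b q : K) (n k : nat) (t : nat -> K)
    (lam : nat -> nat) (y : 'I_n -> K) :
  (forall j, (n + k < j)%N -> t j = 0) ->
  (forall j, 1 + b * t j != 0) ->
  (forall i, 1 + b * y i != 0) ->
  (0 < n)%N ->
  (forall i j, (i <= j)%N -> (j < n)%N -> (lam j <= lam i)%N) ->
  (k < lam 0%N)%N ->
  injective y ->
  BAE b q (n + k) t y ->
  Gfun b (fun i => (lam i)%:Z) y (ominus_seq b t)
  = q * \sum_(0 <= r < (lam 0%N - k)%N)
          (hcomp (lam 0%N - 1 - k - r)%N r.+1 t
           * Gfun b (shiftSeq n lam r) y (ominus_seq b t)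
           * \prod_(1 <= i < r.+1) (1 + b * t i)).
Proof.
move=> t_eq0 unit_t unit_y n_gt0 _ lt_k_lam _ bae.
case: n n_gt0 y unit_y bae t_eq0 => [//|n] _ y unit_y bae t_eq0.
set m := (lam 0%N - 1 - k)%N; have -> : (lam 0%N - k = m.+1)%N by rewrite /m; lia.
set s := ominus_seq b t; set kap := - ((-1) ^+ n.+1 * q / PiY b y).
pose a r := hcomp (m - r) r.+1 t * \prod_(1 <= i < r.+1) (1 + b * t i).
have row0 j : Gmx b (fun i => (lam i)%:Z) y s ord0 j
    = \sum_(0 <= r < m.+1) kap * a r * (fpow b (y j) s r * (1 + b * y j) ^+ n.+1).
  rewrite mxE /= expr0 mulr1.
  have -> : (lam 0%N + (n.+1 - 1) = n.+1 + k + m)%N by rewrite /m; lia.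
  rewrite fpow_ominus_seq_expand // (BAE_fpow unit_t _ unit_y bae).
  by rewrite !mulr_sumr; apply: eq_bigr => r _; rewrite /a /kap /s; ring.
have Pi_neq0 : PiY b y != 0 by apply/prodf_neq0 => i _; apply: unit_y.
rewrite GfunE (det_sum_row row0) mulr_suml mulr_sumr; apply: eq_bigr => r _.
rewrite det_Gmx_shiftSeq GfunE /kap /a exprS.
rewrite -[q in RHS]mul1r -[X in X * q](signr_nat_sqr K n).
(* The Vandermonde determinant only needs to be a common factor, not a unit. *)
by move: (\det _)^-1 => w; field; rewrite Pi_neq0.
Qed.
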